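(* Let $\alpha\in(1,\infty)$, let $p_{Y\mid X}$ be a channel between finite sets $\mathcal X,\mathcal Y$, and for a distribution $p_X$ on $\mathcal X$, a joint distribution $\tilde q_{X,Y}$ on $\mathcal X\times\mathcal Y$ with $X$-marginal $\tilde q_X$, and a reverse channel $r_{X\mid Y}$, define $$\tilde F_\alpha^{\mathrm{S3}}(p_X,\tilde q_{X,Y},r_{X\mid Y}):=\frac{\alpha}{1-\alpha}D(\tilde q_{X,Y}\|\tilde q_Xp_{Y\mid X})+\mathbb E^{\tilde q_{X,Y}}\!\left[\log\frac{r_{X\mid Y}(X\mid Y)}{\tilde q_X(X)}\right]+\frac{1}{1-\alpha}D(\tilde q_X\|p_X).$$ Then: (1) for fixed $(p_X,\tilde q_{X,Y})$, $\tilde F_\alpha^{\mathrm{S3}}$ is maximized over $r_{X\mid Y}$ by $r^*_{X\mid Y}(x\mid y)=\tilde q_{X,Y}(x,y)/\sum_{x'}\tilde q_{X,Y}(x',y)$; (2) for fixed $(\tilde q_{X,Y},r_{X\mid Y})$, it is maximized over $p_X$ by $p_X^*(x)=\sum_y\tilde q_{X,Y}(x,y)$; (3) for fixed $(p_X,r_{X\mid Y})$, it is maximized over $\tilde q_{X,Y}$ by $$\tilde q^*_{X,Y}(x,y)=\frac{p_X(x)^{1/\alpha}p_{Y\mid X}(y\mid x)r_{X\mid Y}(x\mid y)^{1-1/\alpha}}{\sum_{x',y'}p_X(x')^{1/\alpha}p_{Y\mid X}(y'\mid x')r_{X\mid Y}(x'\mid y')^{1-1/\alpha}}.$$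
   Context: $\log$ is natural and $D$ is the Kullback–Leibler divergence. A reverse channel $r_{X\mid Y}$ is a family $\{r_{X\mid Y}(\cdot\mid y)\}_{y\in\mathcal Y}$ of distributions on $\mathcal X$. *)

From HB Require Import structures.
From mathcomp Require Import all_boot all_order all_algebra.
From mathcomp Require Import all_classical all_reals.
From mathcomp Require Import ereal exp.
Set Implicit Arguments. Unset Strict Implicit. Unset Printing Implicit Defensive.
Import Order.TTheory GRing.Theory Num.Theory.
Local Open Scope ring_scope.
Local Open Scope ereal_scope.

Section Defs.
Variables (R : realType) (X Y : finType).

Definition is_dist (T : finType) (p : T -> R) : Prop :=
  (forall t, (0 <= p t)%R) /\ (\sum_(t : T) p t = 1)%R.

Definition is_channel (W : X -> Y -> R) : Prop := forall x, is_dist (W x).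

(* a reverse channel r_{X|Y}: r y x = r_{X|Y}(x|y) *)
Definition is_rev_channel (r : Y -> X -> R) : Prop := forall y, is_dist (r y).

Definition margX (q : X * Y -> R) (x : X) : R := (\sum_(y : Y) q (x, y))%R.
Definition margY (q : X * Y -> R) (y : Y) : R := (\sum_(x : X) q (x, y))%R.

(* a * log (a / b) with conventions 0 log(0/b) = 0, a log(a/0) = +oo (a>0) *)
Definition klterm (a b : R) : \bar R :=
  if a == 0%R then 0 else if b == 0%R then +oo else (a * ln (a / b))%:E.

Definition KL (T : finType) (q p : T -> R) : \bar R := \sum_(t : T) klterm (q t) (p t).

(* a * log (b / c) with conventions 0 log(..) = 0, a log(0/c) = -oo (a>0) *)
Definition eterm (a b c : R) : \bar R :=
  if a == 0%R then 0 else if b == 0%R then -oo else (a * ln (b / c))%:E.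

Definition Elog (q : X * Y -> R) (r : Y -> X -> R) : \bar R :=
  \sum_(xy : X * Y) eterm (q xy) (r xy.2 xy.1) (margX q xy.1).

Definition FS3 (alpha : R) (W : X -> Y -> R) (p : X -> R) (q : X * Y -> R)
    (r : Y -> X -> R) : \bar R :=
  (alpha / (1 - alpha))%:E * KL q (fun xy => margX q xy.1 * W xy.1 xy.2)%R
  + Elog q r
  + (1 / (1 - alpha))%:E * KL (margX q) p.

Definition qtilde (alpha : R) (W : X -> Y -> R) (p : X -> R) (r : Y -> X -> R)
    (xy : X * Y) : R :=
  (p xy.1 `^ (1 / alpha) * W xy.1 xy.2 * r xy.2 xy.1 `^ (1 - 1 / alpha))%R.

End Defs.

From HB Require Import structures.
From mathcomp Require Import all_boot all_order all_algebra.
From mathcomp Require Import all_classical all_reals.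
From mathcomp Require Import ereal exp ring lra.
Import Order.TTheory GRing.Theory Num.Theory.
Set Implicit Arguments. Unset Strict Implicit. Unset Printing Implicit Defensive.
Local Open Scope ring_scope.

(* Wherever it is finite, FS3 equals alpha / (1 - alpha) * D(q || qtilde), where
   qtilde(x, y) = p(x)^(1/alpha) W(y|x) r(x|y)^(1 - 1/alpha) is an unnormalised
   tilted joint; elsewhere it is -oo. As alpha / (1 - alpha) < 0, each part amounts
   to minimising this divergence in one argument, and each time Gibbs' inequality
   sum q ln (b / q) <= sum b - sum q does it: moving r to q / q_Y changes the
   divergence by (1 - 1/alpha) sum q ln (q_Y r / q) <= 0, moving p to q_X by
   (1/alpha) sum q_X ln (p / q_X) <= 0, and D(q || qtilde) = D(q || qstar) - ln Z
   >= -ln Z = D(qstar || qtilde) for the normalisation qstar = qtilde / Z. *)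

Section Gibbs.
Variable R : realType.

Lemma mulr_lnB_le (a b : R) : 0 < a -> 0 < b -> a * (ln b - ln a) <= b - a.
Proof.
move=> a_gt0 b_gt0.
have ba_gt0 : 0 < b / a by rewrite divr_gt0.
have ln_le : ln (b / a) <= b / a - 1.
  have ba1 : -1 < b / a - 1 by lra.
  by have := le_ln1Dx ba1; rewrite addrC subrK.
have := ler_wpM2l (ltW a_gt0) ln_le.
rewrite -ln_div // mulrBr mulr1 mulrCA divff ?mulr1 ?gt_eqF //.
Qed.

Lemma gibbs_sum (T : finType) (a b : T -> R) :
  (forall t, 0 <= a t) -> (forall t, 0 <= b t) ->
  (forall t, a t != 0 -> 0 < b t) ->
  \sum_t a t * (ln (b t) - ln (a t)) <= \sum_t b t - \sum_t a t.
Proof.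
move=> a_ge0 b_ge0 ab_gt0; rewrite -sumrB; apply: ler_sum => t _.
have [->|a_neq0] := eqVneq (a t) 0; first by rewrite mul0r subr0.
by apply: mulr_lnB_le; [rewrite lt0r a_neq0 a_ge0 | exact: ab_gt0].
Qed.

Lemma eq_sum_supp (T : finType) (a f g : T -> R) :
  (forall t, a t != 0 -> f t = g t) ->
  \sum_t a t * f t = \sum_t a t * g t.
Proof.
move=> fg; apply: eq_bigr => t _.
by have [->|/fg->] := eqVneq (a t) 0; rewrite ?mul0r.
Qed.

End Gibbs.

Section Marginals.
Variables (R : realType) (X Y : finType).
Implicit Type q : X * Y -> R.

Lemma sum_prod (f : X * Y -> R) : \sum_xy f xy = \sum_x \sum_y f (x, y).
Proof. by rewrite pair_bigA; apply: eq_bigr => -[]. Qed.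

Lemma sum_margX_mull q (f : X -> R) :
  \sum_x margX q x * f x = \sum_xy q xy * f xy.1.
Proof. by rewrite sum_prod; apply: eq_bigr => x _; rewrite mulr_suml. Qed.

Lemma sum_margX q : \sum_x margX q x = \sum_xy q xy.
Proof. by rewrite sum_prod. Qed.

Lemma sum_margY q : \sum_y margY q y = \sum_xy q xy.
Proof. by rewrite sum_prod exchange_big. Qed.

Lemma margX_ge0 q : (forall xy, 0 <= q xy) -> forall x, 0 <= margX q x.
Proof. by move=> q_ge0 x; apply: sumr_ge0 => y _. Qed.

Lemma margX_gt0 q x y :
  (forall xy, 0 <= q xy) -> q (x, y) != 0 -> 0 < margX q x.
Proof.
move=> q_ge0 qxy_neq0; rewrite /margX (bigD1 y) //=.
have : 0 <= \sum_(y' | y' != y) q (x, y') by apply: sumr_ge0.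
have : 0 < q (x, y) by rewrite lt0r qxy_neq0 q_ge0.
lra.
Qed.

Lemma margY_gt0 q x y :
  (forall xy, 0 <= q xy) -> q (x, y) != 0 -> 0 < margY q y.
Proof.
move=> q_ge0 qxy_neq0; rewrite /margY (bigD1 x) //=.
have : 0 <= \sum_(x' | x' != x) q (x', y) by apply: sumr_ge0.
have : 0 < q (x, y) by rewrite lt0r qxy_neq0 q_ge0.
lra.
Qed.

Lemma margX_neq0 q x : margX q x != 0 -> exists y, q (x, y) != 0.
Proof.
move=> mx_neq0; apply/existsP; apply: contraNT mx_neq0 => /existsPn q0.
by apply/eqP/big1 => y _; apply/eqP; rewrite -[_ == _]negbK q0.
Qed.

End Marginals.

Section Divergences.
Variables (R : realType) (X Y : finType).

Lemma KL_fin (T : finType) (q p : T -> R) :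
  (forall t, q t != 0 -> p t != 0) ->
  KL q p = (\sum_t q t * ln (q t / p t))%:E.
Proof.
move=> qp; rewrite /KL -sumEFin; apply: eq_bigr => t _; rewrite /klterm.
have [->|qt_neq0] := eqVneq (q t) 0; first by rewrite mul0r.
by rewrite (negbTE (qp _ qt_neq0)).
Qed.

Lemma KL_eqy (T : finType) (q p : T -> R) t :
  q t != 0 -> p t = 0 -> KL q p = +oo%E.
Proof.
move=> qt_neq0 pt0; apply/eqP; rewrite esum_eqy.
- by apply/existsP; exists t; rewrite /klterm (negbTE qt_neq0) pt0 eqxx.
- by move=> s _; rewrite /klterm; case: ifP => //; case: ifP.
Qed.

Lemma Elog_fin (q : X * Y -> R) (r : Y -> X -> R) :
  (forall xy, q xy != 0 -> r xy.2 xy.1 != 0) ->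
  Elog q r = (\sum_xy q xy * ln (r xy.2 xy.1 / margX q xy.1))%:E.
Proof.
move=> qr; rewrite /Elog -sumEFin; apply: eq_bigr => xy _; rewrite /eterm.
have [->|qxy_neq0] := eqVneq (q xy) 0; first by rewrite mul0r.
by rewrite (negbTE (qr _ qxy_neq0)).
Qed.

Lemma Elog_eqNy (q : X * Y -> R) (r : Y -> X -> R) xy :
  q xy != 0 -> r xy.2 xy.1 = 0 -> Elog q r = -oo%E.
Proof.
move=> qxy_neq0 r0.
by rewrite /Elog (bigD1 xy) //= /eterm (negbTE qxy_neq0) r0 eqxx addNye.
Qed.

End Divergences.

Section TiltedDivergence.
Variables (R : realType) (X Y : finType) (alpha : R) (W : X -> Y -> R).
Hypothesis alpha_gt1 : 1 < alpha.
Hypothesis W_ge0 : forall x y, 0 <= W x y.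

Definition compatible (p : X -> R) (q : X * Y -> R) (r : Y -> X -> R) :=
  forall xy, q xy != 0 -> [/\ 0 < p xy.1, 0 < W xy.1 xy.2 & 0 < r xy.2 xy.1].

(* D(q || qtilde), which may be negative as [qtilde] is not normalised. *)
Definition Dtilt (p : X -> R) (q : X * Y -> R) (r : Y -> X -> R) : R :=
  \sum_xy q xy * (ln (q xy) - ln (qtilde alpha W p r xy)).

Lemma alpha_gt0 : 0 < alpha. Proof. exact: lt_trans ltr01 alpha_gt1. Qed.

Lemma div_1subr_lt0 (a : R) : 0 < a -> a / (1 - alpha) < 0.
Proof. by move=> a_gt0; rewrite pmulr_rlt0 // invr_lt0 subr_lt0. Qed.

Lemma qtilde_ge0 (p : X -> R) (r : Y -> X -> R) xy : 0 <= qtilde alpha W p r xy.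
Proof. by rewrite /qtilde !mulr_ge0 ?powR_ge0. Qed.

Lemma qtilde_gt0 (p : X -> R) (r : Y -> X -> R) xy :
  0 <= p xy.1 -> 0 <= r xy.2 xy.1 ->
  0 < qtilde alpha W p r xy <-> [/\ 0 < p xy.1, 0 < W xy.1 xy.2 & 0 < r xy.2 xy.1].
Proof.
move=> p_ge0 r_ge0; have a_gt0 := alpha_gt0.
have inv_gt0 : 0 < 1 / alpha by rewrite divr_gt0.
have exp_gt0 : 0 < 1 - 1 / alpha by rewrite subr_gt0 mul1r invf_lt1.
rewrite /qtilde; split => [|[p_gt0 W_gt0 r_gt0]]; last by rewrite !mulr_gt0 ?powR_gt0.
rewrite lt0r !mulf_eq0 !negb_or => /andP[/andP[/andP[pu_neq0 W_neq0 rv_neq0] _]].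
split; first by apply: gt0_powR inv_gt0 p_ge0 _; rewrite lt0r pu_neq0 powR_ge0.
- by rewrite lt0r W_neq0 W_ge0.
- apply: gt0_powR exp_gt0 r_ge0 _.
  by rewrite lt0r rv_neq0 powR_ge0.
Qed.

Lemma ln_qtilde (p : X -> R) (r : Y -> X -> R) xy :
  0 < p xy.1 -> 0 < W xy.1 xy.2 -> 0 < r xy.2 xy.1 ->
  ln (qtilde alpha W p r xy) =
  1 / alpha * ln (p xy.1) + ln (W xy.1 xy.2) + (1 - 1 / alpha) * ln (r xy.2 xy.1).
Proof. by move=> *; rewrite /qtilde !lnM ?posrE ?mulr_gt0 ?powR_gt0 // !ln_powR. Qed.

Lemma FS3_compatible (p : X -> R) (q : X * Y -> R) (r : Y -> X -> R) :
  (forall xy, 0 <= q xy) -> compatible p q r ->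
  FS3 alpha W p q r = (alpha / (1 - alpha) * Dtilt p q r)%:E.
Proof.
move=> q_ge0 pqr.
have mX_gt0 xy : q xy != 0 -> 0 < margX q xy.1.
  by case: xy => x y; exact: margX_gt0.
rewrite /FS3 KL_fin; last first.
  move=> xy qxy_neq0; have [_ W_gt0 _] := pqr _ qxy_neq0.
  by rewrite mulf_neq0 ?gt_eqF ?mX_gt0.
rewrite Elog_fin; last by move=> xy /pqr[_ _ r_gt0]; rewrite gt_eqF.
rewrite KL_fin; last by move=> x /margX_neq0[y /pqr[p_gt0 _ _]]; rewrite gt_eqF.
rewrite sum_margX_mull -!EFinM -!EFinD; congr EFin.
rewrite /Dtilt !mulr_sumr -!big_split /=; apply: eq_bigr => xy _.
have [->|qxy_neq0] := eqVneq (q xy) 0; first by rewrite !(mul0r, mulr0, addr0).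
have q_gt0 : 0 < q xy by rewrite lt0r qxy_neq0 q_ge0.
have [p_gt0 W_gt0 r_gt0] := pqr _ qxy_neq0.
have mXxy_gt0 := mX_gt0 _ qxy_neq0.
rewrite ln_qtilde // !ln_div ?posrE ?mulr_gt0 // lnM ?posrE //.
(* The [ln (margX q)] terms cancel since alpha / (1 - alpha) + 1 = 1 / (1 - alpha). *)
have alpha_neq0 : alpha != 0 by rewrite gt_eqF ?alpha_gt0.
have alpha_neq1 : 1 - alpha != 0 by rewrite lt_eqF ?subr_lt0.
by field; rewrite alpha_neq0 alpha_neq1.
Qed.

Lemma FS3_incompatible (p : X -> R) (q : X * Y -> R) (r : Y -> X -> R) :
  (forall x, 0 <= p x) -> (forall xy, 0 <= q xy) -> (forall y x, 0 <= r y x) ->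
  ~ compatible p q r -> FS3 alpha W p q r = -oo%E.
Proof.
move=> p_ge0 q_ge0 r_ge0 /existsNP[[x y] /not_implyP[/= qxy_neq0 /not_and3P]].
have eq0 (z : R) : 0 <= z -> ~ 0 < z -> z = 0.
  by move=> z_ge0 /negP; rewrite lt0r z_ge0 andbT negbK => /eqP.
rewrite /FS3.
case=> [/(eq0 _ (p_ge0 x)) p0 | /(eq0 _ (W_ge0 x y)) W0 | /(eq0 _ (r_ge0 y x)) r0].
- rewrite (@KL_eqy _ _ (margX q) p x) ?gt_eqF ?(margX_gt0 _ qxy_neq0) //.
  by rewrite lt0_muley ?lte_fin ?div_1subr_lt0 ?addeNy.
- rewrite (@KL_eqy _ _ _ _ (x, y)) /= ?W0 ?mulr0 //.
  by rewrite lt0_muley ?lte_fin ?div_1subr_lt0 ?alpha_gt0 ?addNye.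
- by rewrite (@Elog_eqNy _ _ _ _ _ (x, y)) // addeNy addNye.
Qed.

Lemma FS3_le_of_Dtilt (p p' : X -> R) (q q' : X * Y -> R) (r r' : Y -> X -> R) :
  (forall x, 0 <= p x) -> (forall xy, 0 <= q xy) -> (forall y x, 0 <= r y x) ->
  (forall xy, 0 <= q' xy) -> (compatible p q r -> compatible p' q' r') ->
  (compatible p q r -> Dtilt p' q' r' <= Dtilt p q r) ->
  (FS3 alpha W p q r <= FS3 alpha W p' q' r')%E.
Proof.
move=> p_ge0 q_ge0 r_ge0 q'_ge0 pqr' le_Dtilt.
have [pqr|not_pqr] := pselect (compatible p q r); last first.
  by rewrite FS3_incompatible ?leNye.
rewrite !FS3_compatible //; last exact: pqr'.
rewrite lee_fin ler_wnM2l ?le_Dtilt //.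
by rewrite ltW ?div_1subr_lt0 ?alpha_gt0.
Qed.

Lemma Dtilt_rev_channel_opt (p : X -> R) (q : X * Y -> R) (rstar r : Y -> X -> R) :
  (forall xy, 0 <= q xy) -> \sum_xy q xy = 1 -> is_rev_channel r ->
  (forall x y, 0 < margY q y -> rstar y x = q (x, y) / margY q y) ->
  compatible p q r -> Dtilt p q rstar <= Dtilt p q r.
Proof.
move=> q_ge0 q1 r_dist rstarE pqr.
have r_ge0 y x : 0 <= r y x by case: (r_dist y).
pose b xy := margY q xy.2 * r xy.2 xy.1.
have Dtilt_diff : Dtilt p q rstar - Dtilt p q r =
    (1 - 1 / alpha) * \sum_xy q xy * (ln (b xy) - ln (q xy)).
  rewrite /Dtilt -sumrB mulr_sumr; apply: eq_bigr => -[x y] _ /=.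
  have [->|qxy_neq0] := eqVneq (q (x, y)) 0; first by rewrite !(mul0r, mulr0, subrr).
  have q_gt0 : 0 < q (x, y) by rewrite lt0r qxy_neq0 q_ge0.
  have mY_gt0 := margY_gt0 q_ge0 qxy_neq0.
  have [p_gt0 W_gt0 r_gt0] := pqr _ qxy_neq0.
  have rstar_gt0 : 0 < rstar y x by rewrite rstarE // divr_gt0.
  rewrite !ln_qtilde // /b /= rstarE // ln_div ?lnM ?posrE //; ring.
have b_sum : \sum_xy b xy = 1.
  rewrite sum_prod exchange_big /= -q1 -sum_margY; apply: eq_bigr => y _.
  by rewrite /b /= -mulr_sumr (r_dist y).2 mulr1.
rewrite -subr_le0 Dtilt_diff mulr_ge0_le0 //.
  by rewrite subr_ge0 mul1r invf_le1 ?ltW ?alpha_gt0.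
apply: le_trans (gibbs_sum q_ge0 _ _) _.
- by move=> [x y]; rewrite mulr_ge0 ?sumr_ge0.
- move=> [x y] qxy_neq0; have [_ _ r_gt0] := pqr _ qxy_neq0.
  by rewrite mulr_gt0 ?(margY_gt0 q_ge0 qxy_neq0).
- by rewrite b_sum q1 subrr.
Qed.

Lemma Dtilt_input_opt (p : X -> R) (q : X * Y -> R) (r : Y -> X -> R) :
  (forall xy, 0 <= q xy) -> \sum_xy q xy = 1 -> is_dist p ->
  compatible p q r -> Dtilt (margX q) q r <= Dtilt p q r.
Proof.
move=> q_ge0 q1 [p_ge0 p1] pqr.
have Dtilt_diff : Dtilt (margX q) q r - Dtilt p q r =
    1 / alpha * \sum_x margX q x * (ln (p x) - ln (margX q x)).
  rewrite /Dtilt -sumrB sum_margX_mull mulr_sumr; apply: eq_bigr => -[x y] _ /=.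
  have [->|qxy_neq0] := eqVneq (q (x, y)) 0; first by rewrite !(mul0r, mulr0, subrr).
  have mX_gt0 := margX_gt0 q_ge0 qxy_neq0.
  have [p_gt0 W_gt0 r_gt0] := pqr _ qxy_neq0.
  rewrite !ln_qtilde //; ring.
rewrite -subr_le0 Dtilt_diff mulr_ge0_le0 //; first by rewrite divr_ge0 ?ltW ?alpha_gt0.
apply: le_trans (gibbs_sum (margX_ge0 q_ge0) p_ge0 _) _.
- by move=> x /margX_neq0[y /pqr[p_gt0 _ _]].
- by rewrite sum_margX q1 p1 subrr.
Qed.

Definition qstar (p : X -> R) (r : Y -> X -> R) (xy : X * Y) : R :=
  qtilde alpha W p r xy / \sum_xy' qtilde alpha W p r xy'.

Lemma qstar_ge0 (p : X -> R) (r : Y -> X -> R) :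
  0 < \sum_xy qtilde alpha W p r xy -> forall xy, 0 <= qstar p r xy.
Proof. by move=> Z_gt0 xy; rewrite divr_ge0 ?qtilde_ge0 ?ltW. Qed.

Lemma sum_qstar (p : X -> R) (r : Y -> X -> R) :
  0 < \sum_xy qtilde alpha W p r xy -> \sum_xy qstar p r xy = 1.
Proof. by move=> Z_gt0; rewrite -mulr_suml divff ?gt_eqF. Qed.

Lemma qtilde_gt0_of_qstar (p : X -> R) (r : Y -> X -> R) xy :
  qstar p r xy != 0 -> 0 < qtilde alpha W p r xy.
Proof.
by rewrite mulf_eq0 negb_or => /andP[qt_neq0 _]; rewrite lt0r qt_neq0 qtilde_ge0.
Qed.

Lemma Dtilt_qstar (p : X -> R) (r : Y -> X -> R) :
  0 < \sum_xy qtilde alpha W p r xy ->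
  Dtilt p (qstar p r) r = - ln (\sum_xy qtilde alpha W p r xy).
Proof.
move=> Z_gt0; rewrite /Dtilt -[RHS]mul1r -(sum_qstar Z_gt0) mulr_suml.
apply: eq_sum_supp => xy /qtilde_gt0_of_qstar qt_gt0.
by rewrite /qstar ln_div ?posrE // addrAC subrr add0r.
Qed.

Lemma Dtilt_joint_opt (p : X -> R) (r : Y -> X -> R) (q : X * Y -> R) :
  (forall x, 0 <= p x) -> (forall y x, 0 <= r y x) ->
  0 < \sum_xy qtilde alpha W p r xy ->
  (forall xy, 0 <= q xy) -> \sum_xy q xy = 1 ->
  compatible p q r -> Dtilt p (qstar p r) r <= Dtilt p q r.
Proof.
move=> p_ge0 r_ge0 Z_gt0 q_ge0 q1 pqr; rewrite Dtilt_qstar //.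
set Z := \sum_xy _ in Z_gt0 *.
have qt_gt0 xy : q xy != 0 -> 0 < qtilde alpha W p r xy.
  by move=> /pqr pos; apply/qtilde_gt0.
have Dtilt_q : Dtilt p q r =
    - (\sum_xy q xy * (ln (qstar p r xy) - ln (q xy))) - ln Z.
  rewrite -[ln Z]mul1r -q1 mulr_suml -sumrN -sumrB; apply: eq_bigr => xy _.
  have [->|/qt_gt0 qt_pos] := eqVneq (q xy) 0; first by rewrite !(mul0r, oppr0, addr0).
  rewrite /qstar ln_div ?posrE //; ring.
have qstar_gt0 xy : q xy != 0 -> 0 < qstar p r xy.
  by move=> /qt_gt0 qt_pos; rewrite divr_gt0.
have := gibbs_sum q_ge0 (qstar_ge0 Z_gt0) qstar_gt0.
rewrite sum_qstar // q1 subrr Dtilt_q; lra.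
Qed.

Lemma FS3_rev_channel_opt (p : X -> R) (q : X * Y -> R) (rstar r : Y -> X -> R) :
  is_dist p -> is_dist q ->
  (forall x y, 0 < margY q y -> rstar y x = q (x, y) / margY q y) ->
  is_rev_channel r -> (FS3 alpha W p q r <= FS3 alpha W p q rstar)%E.
Proof.
move=> [p_ge0 _] [q_ge0 q1] rstarE r_dist.
apply: FS3_le_of_Dtilt => //; last exact: Dtilt_rev_channel_opt.
- by move=> y x; case: (r_dist y).
- move=> pqr [x y] qxy_neq0; have [p_gt0 W_gt0 _] := pqr _ qxy_neq0.
  have mY_gt0 := margY_gt0 q_ge0 qxy_neq0.
  by split=> //=; rewrite rstarE // divr_gt0 // lt0r qxy_neq0 q_ge0.
Qed.

Lemma FS3_input_opt (q : X * Y -> R) (r : Y -> X -> R) (p : X -> R) :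
  is_dist q -> is_rev_channel r -> is_dist p ->
  (FS3 alpha W p q r <= FS3 alpha W (margX q) q r)%E.
Proof.
move=> [q_ge0 q1] r_dist p_dist.
apply: FS3_le_of_Dtilt => //; last exact: Dtilt_input_opt.
- by case: p_dist.
- by move=> y x; case: (r_dist y).
- move=> pqr [x y] qxy_neq0; have [_ W_gt0 r_gt0] := pqr _ qxy_neq0.
  by split=> //; exact: margX_gt0 q_ge0 qxy_neq0.
Qed.

Lemma FS3_joint_opt (p : X -> R) (r : Y -> X -> R) (q : X * Y -> R) :
  is_dist p -> is_rev_channel r -> 0 < \sum_xy qtilde alpha W p r xy ->
  is_dist q -> (FS3 alpha W p q r <= FS3 alpha W p (qstar p r) r)%E.
Proof.
move=> [p_ge0 _] r_dist Z_gt0 [q_ge0 q1].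
have r_ge0 y x : 0 <= r y x by case: (r_dist y).
apply: FS3_le_of_Dtilt => //; last exact: Dtilt_joint_opt.
- exact: qstar_ge0.
- by move=> _ xy /qtilde_gt0_of_qstar/qtilde_gt0; apply.
Qed.

End TiltedDivergence.

Local Open Scope ereal_scope.

Theorem proposition5 (R : realType) (X Y : finType) (alpha : R)
  (W : X -> Y -> R) :
  (1 < alpha)%R -> is_channel W ->
  (* (1) optimal reverse channel *)
  (forall (p : X -> R) (q : X * Y -> R), is_dist p -> is_dist q ->
     forall rstar : Y -> X -> R, is_rev_channel rstar ->
     (forall x y, (0 < margY q y)%R -> rstar y x = (q (x, y) / margY q y)%R) ->
     forall r : Y -> X -> R, is_rev_channel r ->
       FS3 alpha W p q r <= FS3 alpha W p q rstar) /\
  (* (2) optimal input distribution *)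
  (forall (q : X * Y -> R) (r : Y -> X -> R), is_dist q -> is_rev_channel r ->
     forall p : X -> R, is_dist p ->
       FS3 alpha W p q r <= FS3 alpha W (margX q) q r) /\
  (* (3) optimal joint distribution *)
  (forall (p : X -> R) (r : Y -> X -> R), is_dist p -> is_rev_channel r ->
     (0 < \sum_(xy : X * Y) qtilde alpha W p r xy)%R ->
     forall q : X * Y -> R, is_dist q ->
       FS3 alpha W p q r <=
       FS3 alpha W p
         (fun xy => qtilde alpha W p r xy / \sum_(xy' : X * Y) qtilde alpha W p r xy')%R
         r).
Proof.
move=> alpha_gt1 W_dist.
have W_ge0 x y : (0 <= W x y)%R by case: (W_dist x).
split; [|split].
- by move=> p q p_dist q_dist rstar _ rstarE r r_dist; exact: FS3_rev_channel_opt.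
- by move=> q r q_dist r_dist p p_dist; exact: FS3_input_opt.
- by move=> p r p_dist r_dist Z_gt0 q q_dist; exact: FS3_joint_opt.
Qed.
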